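(* Consider the 2-user system below and any statistics-unaware algorithm $\pi$ that transmits (i.e., chooses a nonzero vector) whenever at least one channel is ON. Then there exists a PMF $P\in\{\text{A},\text{B}\}$ for $S[t]$ such that, when $S[t]$ is i.i.d. with PMF $P$ and $\pi$ is run, $$\phi\big(\mathbb{E}[\overline{\mu}_1[T]],\,\mathbb{E}[\overline{\mu}_2[T]]\big)\;\le\;\phi^{opt}_P-\frac{1}{35T}\qquad\text{for all }T\in\{2,3,4,\ldots\},$$ where $\phi^{opt}_P=\log(1+3/4)+\log(1+1/4)$ is the optimal utility under $P$ (the same value for both A and B).
   Context: Two-user ON/OFF system: slotted time $t\in\{0,1,2,\ldots\}$; channel states $S[t]\in\{(ON,OFF),(ON,ON),(OFF,ON)\}$ are i.i.d. over slots. The allowed decision sets are: if $S[t]=(ON,OFF)$, $(\mu_1[t],\mu_2[t])\in\{(0,0),(1,0)\}$; if $S[t]=(ON,ON)$, $(\mu_1[t],\mu_2[t])\in\{(0,0),(1,0),(0,1)\}$; if $S[t]=(OFF,ON)$, $(\mu_1[t],\mu_2[t])\in\{(0,0),(0,1)\}$. PMF A assigns probabilities $3/4,1/4,0$ and PMF B assigns $0,1/4,3/4$ to $(ON,OFF),(ON,ON),(OFF,ON)$ respectively. The utility is $\phi(\gamma_1,\gamma_2)=\log(1+\gamma_1)+\log(1+\gamma_2)$ on $[0,1]^2$ (natural log). $\overline{\mu}_i[T]=\frac1T\sum_{t=0}^{T-1}\mu_i[t]$. A statistics-unaware algorithm is a fixed (possibly randomized) causal rule choosing $\mu[t]$ in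 the allowed set as a function of the current and past channel observations, past decisions, and internal randomness only; it is fixed before the PMF is chosen and does not depend on the PMF. The optimal utility under a PMF $P$ is $\phi^{opt}_P=\max_{x\in\Lambda_P}\phi(x)$, where $\Lambda_P$ is the set of expectations $\mathbb{E}[\mu[0]]$ achievable under $P$ by any (possibly randomized) rule choosing $\mu[0]$ from the allowed set given $S[0]$. *)

From Stdlib Require Import Reals Lra List.
Import ListNotations.
Open Scope R_scope.

Inductive State := ON_OFF | ON_ON | OFF_ON.

Inductive Dec := D00 | D10 | D01.

Definition mu1 (d : Dec) : R := match d with D10 => 1 | _ => 0 end.
Definition mu2 (d : Dec) : R := match d with D01 => 1 | _ => 0 end.

Definition allowed (s : State) (d : Dec) : Prop :=
  match s, d with
  | _, D00 => True
  | ON_OFF, D10 => True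
  | ON_ON, _ => True
  | OFF_ON, D01 => True
  | _, _ => False
  end.

Definition sum_state (f : State -> R) : R := f ON_OFF + f ON_ON + f OFF_ON.
Definition sum_dec (f : Dec -> R) : R := f D00 + f D10 + f D01.

Definition pmfA (s : State) : R :=
  match s with ON_OFF => 3/4 | ON_ON => 1/4 | OFF_ON => 0 end.
Definition pmfB (s : State) : R :=
  match s with ON_OFF => 0 | ON_ON => 1/4 | OFF_ON => 3/4 end.

(* A history: the past (state, decision) pairs, most recent first. *)
Definition history := list (State * Dec).

(* A statistics-unaware randomized causal algorithm, in behavioral form:
   alg h s d = probability of choosing decision d at the current slot, given
   the past history h of observed states and decisions and the current state s.
   It does not take the PMF as an argument. *)
Definition algorithm := history -> State -> Dec -> R.

Definition valid_alg (alg : algorithm) : Prop :=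
  (forall h s d, 0 <= alg h s d) /\
  (forall h s, sum_dec (alg h s) = 1) /\
  (forall h s d, ~ allowed s d -> alg h s d = 0).

(* At least one channel is ON in every state, so "transmits whenever at least
   one channel is ON" means the zero vector is never chosen. *)
Definition always_transmits (alg : algorithm) : Prop :=
  forall h s, alg h s D00 = 0.

Fixpoint exp_future (P : State -> R) (alg : algorithm) (f : Dec -> R)
    (h : history) (n : nat) : R :=
  match n with
  | O => 0
  | S n' => sum_state (fun s => P s * sum_dec (fun d =>
              alg h s d * (f d + exp_future P alg f ((s, d) :: h) n')))
  end.

Definition exp_avg (P : State -> R) (alg : algorithm) (f : Dec -> R) (T : nat) : R :=
  exp_future P alg f [] T / INR T.

Definition phi (g1 g2 : R) : R := ln (1 + g1) + ln (1 + g2).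

Definition in_Lambda (P : State -> R) (x1 x2 : R) : Prop :=
  exists r : State -> Dec -> R,
    (forall s d, 0 <= r s d) /\ (forall s, sum_dec (r s) = 1) /\
    (forall s d, ~ allowed s d -> r s d = 0) /\
    x1 = sum_state (fun s => P s * sum_dec (fun d => r s d * mu1 d)) /\
    x2 = sum_state (fun s => P s * sum_dec (fun d => r s d * mu2 d)).

Definition is_phi_opt (P : State -> R) (v : R) : Prop :=
  (forall x1 x2, in_Lambda P x1 x2 -> phi x1 x2 <= v) /\
  (exists x1 x2, in_Lambda P x1 x2 /\ phi x1 x2 = v).

Definition phi_opt_value : R := ln (1 + 3/4) + ln (1 + 1/4).

(* Under either PMF every slot has exactly one successful transmission, so the
   expected averages satisfy x1 + x2 = 1, and on that line phi is maximised at
   the optimum (3/4, 1/4) (resp. (1/4, 3/4)) with tangent slope 4/5 - 4/7 = 8/35.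
   Under A user 2 can only be served in (ON,ON) slots, under B user 1.  In the
   first slot, whose history is empty, the algorithm serves user 1 or user 2 on
   (ON,ON) with probabilities adding up to 1, so one of them is at most 1/2; the
   PMF starving that user costs it at least 1/8 of a service over T slots,
   i.e. 1/(8T) in the average, hence at least (8/35) / (8T) in utility. *)
From Stdlib Require Import Reals Lra Lia List.
Import ListNotations.
Open Scope R_scope.

Lemma ln_le_sub1 z : 0 < z -> ln z <= z - 1.
Proof. intro Hz; pose proof (exp_ineq1_le (ln z)); rewrite exp_ln in *; lra. Qed.

Lemma ln_le_tangent y y0 : 0 < y -> 0 < y0 -> ln y <= ln y0 + (y - y0) / y0.
Proof.
  intros Hy Hy0.
  assert (Hq : 0 < y / y0) by (apply Rdiv_lt_0_compat; lra).
  replace (ln y) with (ln y0 + ln (y / y0)).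
  - pose proof (ln_le_sub1 _ Hq).
    replace ((y - y0) / y0) with (y / y0 - 1) by (field; lra); lra.
  - unfold Rdiv; rewrite ln_mult, ln_Rinv; try lra; auto using Rinv_0_lt_compat.
Qed.

Lemma phi_comm x1 x2 : phi x1 x2 = phi x2 x1.
Proof. unfold phi; ring. Qed.

Lemma phi_le_tangent x1 x2 : 0 <= x1 -> 0 <= x2 ->
  phi x1 x2 <= phi_opt_value + 4/7 * (x1 - 3/4) + 4/5 * (x2 - 1/4).
Proof.
  intros H1 H2; unfold phi, phi_opt_value.
  pose proof (ln_le_tangent (1 + x1) (1 + 3/4) ltac:(lra) ltac:(lra)).
  pose proof (ln_le_tangent (1 + x2) (1 + 1/4) ltac:(lra) ltac:(lra)).
  replace ((1 + x1 - (1 + 3/4)) / (1 + 3/4)) with (4/7 * (x1 - 3/4)) in * by field.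
  replace ((1 + x2 - (1 + 1/4)) / (1 + 1/4)) with (4/5 * (x2 - 1/4)) in * by field.
  lra.
Qed.

Lemma phi_le_opt x1 x2 : 0 <= x1 -> 0 <= x2 -> x1 + x2 <= 1 -> x2 <= 1/4 ->
  phi x1 x2 <= phi_opt_value.
Proof. intros; pose proof (phi_le_tangent x1 x2); lra. Qed.

Lemma phi_average_gap T F1 F2 : 0 < T -> 0 <= F1 -> 0 <= F2 -> F1 + F2 = T ->
  F2 <= T / 4 - 1/8 -> phi (F1 / T) (F2 / T) <= phi_opt_value - 1 / (35 * T).
Proof.
  intros HT H1 H2 Hsum Hgap.
  pose proof (phi_le_tangent (F1 / T) (F2 / T)) as Htan.
  assert (Hx1 : F1 / T = 1 - F2 / T) by (replace F1 with (T - F2) by lra; field; lra).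
  assert (Hx2 : F2 / T <= 1/4 - 1 / (8 * T)).
  { apply (Rmult_le_reg_r T); [lra|]; field_simplify; try lra. }
  replace (1 / (35 * T)) with (8/35 * (1 / (8 * T))) by (field; lra).
  assert (0 <= F1 / T) by (apply Rle_mult_inv_pos; lra).
  assert (0 <= F2 / T) by (apply Rle_mult_inv_pos; lra).
  lra.
Qed.

Lemma mean3_le a b c x y z B : 0 <= a -> 0 <= b -> 0 <= c -> a + b + c = 1 ->
  x <= B -> y <= B -> z <= B -> a * x + b * y + c * z <= B.
Proof. intros; nra. Qed.

Lemma mean3_ge a b c x y z B : 0 <= a -> 0 <= b -> 0 <= c -> a + b + c = 1 ->
  B <= x -> B <= y -> B <= z -> B <= a * x + b * y + c * z.
Proof. intros; nra. Qed.

Definition is_pmf (P : State -> R) : Prop := (forall s, 0 <= P s) /\ sum_state P = 1.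

Lemma is_pmf_pmfA : is_pmf pmfA.
Proof. split; [intros []; simpl; lra | unfold sum_state; simpl; lra]. Qed.

Lemma is_pmf_pmfB : is_pmf pmfB.
Proof. split; [intros []; simpl; lra | unfold sum_state; simpl; lra]. Qed.

Definition slot_mean (P : State -> R) (alg : algorithm) (h : history)
    (g : State -> Dec -> R) : R :=
  sum_state (fun s => P s * sum_dec (fun d => alg h s d * g s d)).

Lemma exp_future_S P alg f h n :
  exp_future P alg f h (S n) =
  slot_mean P alg h (fun _ d => f d) +
  slot_mean P alg h (fun s d => exp_future P alg f ((s, d) :: h) n).
Proof. cbn [exp_future]; unfold slot_mean, sum_state, sum_dec; ring. Qed.

Lemma slot_mean_add P alg h g1 g2 :
  slot_mean P alg h (fun s d => g1 s d + g2 s d) =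
  slot_mean P alg h g1 + slot_mean P alg h g2.
Proof. unfold slot_mean, sum_state, sum_dec; ring. Qed.

Lemma slot_mean_ext P alg h g1 g2 :
  (forall s d, g1 s d = g2 s d) -> slot_mean P alg h g1 = slot_mean P alg h g2.
Proof. intro E; unfold slot_mean, sum_state, sum_dec; rewrite !E; reflexivity. Qed.

Section Slot.
Variable alg : algorithm.
Hypothesis Halg : valid_alg alg.

Lemma alg_D10_add_D01_le1 h s : alg h s D10 + alg h s D01 <= 1.
Proof.
  destruct Halg as [Hnn [Hsum _]].
  pose proof (Hsum h s); pose proof (Hnn h s D00); unfold sum_dec in *; lra.
Qed.

Lemma alg_le1 h s d : alg h s d <= 1.
Proof.
  destruct Halg as [Hnn [Hsum _]].
  pose proof (Hsum h s); pose proof (Hnn h s D00); pose proof (Hnn h s D10);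
    pose proof (Hnn h s D01); unfold sum_dec in *; destruct d; lra.
Qed.

Lemma slot_mean_pmfA_mu2 h : slot_mean pmfA alg h (fun _ => mu2) = alg h ON_ON D01 / 4.
Proof.
  destruct Halg as [_ [_ Hna]].
  unfold slot_mean, sum_state, sum_dec; simpl.
  rewrite (Hna h ON_OFF D01) by (simpl; tauto); field.
Qed.

Lemma slot_mean_pmfB_mu1 h : slot_mean pmfB alg h (fun _ => mu1) = alg h ON_ON D10 / 4.
Proof.
  destruct Halg as [_ [_ Hna]].
  unfold slot_mean, sum_state, sum_dec; simpl.
  rewrite (Hna h OFF_ON D10) by (simpl; tauto); field.
Qed.

Variable P : State -> R.
Hypothesis HP : is_pmf P.

Lemma slot_mean_le h g B : (forall s d, g s d <= B) -> slot_mean P alg h g <= B.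
Proof.
  intro Hg; destruct Halg as [Hnn [Hsum _]]; destruct HP as [HP0 HP1].
  unfold sum_state in HP1; unfold sum_dec in Hsum.
  apply mean3_le; auto; apply mean3_le; auto.
Qed.

Lemma slot_mean_ge h g B : (forall s d, B <= g s d) -> B <= slot_mean P alg h g.
Proof.
  intro Hg; destruct Halg as [Hnn [Hsum _]]; destruct HP as [HP0 HP1].
  unfold sum_state in HP1; unfold sum_dec in Hsum.
  apply mean3_ge; auto; apply mean3_ge; auto.
Qed.

Lemma slot_mean_const h c : slot_mean P alg h (fun _ _ => c) = c.
Proof. apply Rle_antisym; [apply slot_mean_le | apply slot_mean_ge]; intros; lra. Qed.

Lemma slot_mean_transmissions h : always_transmits alg ->
  slot_mean P alg h (fun _ d => mu1 d + mu2 d) = 1.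
Proof.
  intro W; rewrite <- (slot_mean_const h 1).
  unfold slot_mean, sum_state, sum_dec; rewrite !W; cbn [mu1 mu2]; ring.
Qed.

Lemma exp_future_ge0 f : (forall d, 0 <= f d) -> forall n h, 0 <= exp_future P alg f h n.
Proof.
  intros Hf n; induction n as [|n IH]; intro h; [simpl; lra|].
  rewrite exp_future_S.
  pose proof (slot_mean_ge h (fun _ d => f d) 0 (fun _ d => Hf d)).
  pose proof (slot_mean_ge h _ 0 (fun s d => IH ((s, d) :: h))).
  lra.
Qed.

Section Bounded.
Variables (f : Dec -> R) (c : R).
Hypothesis Hslot : forall h, slot_mean P alg h (fun _ d => f d) <= c.

Lemma exp_future_le n : forall h, exp_future P alg f h n <= INR n * c.
Proof.
  induction n as [|n IH]; intro h; [simpl; lra|].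
  rewrite exp_future_S, S_INR.
  pose proof (Hslot h); pose proof (slot_mean_le h _ _ (fun s d => IH ((s, d) :: h))); lra.
Qed.

Lemma exp_future_le_first h n delta : slot_mean P alg h (fun _ d => f d) <= c - delta ->
  exp_future P alg f h (S n) <= INR (S n) * c - delta.
Proof.
  intro Hh; rewrite exp_future_S, S_INR.
  pose proof (slot_mean_le h _ _ (fun s d => exp_future_le n ((s, d) :: h))); lra.
Qed.
End Bounded.

Lemma exp_future_mu1_add_mu2 : always_transmits alg -> forall n h,
  exp_future P alg mu1 h n + exp_future P alg mu2 h n = INR n.
Proof.
  intros W n; induction n as [|n IH]; intro h; [simpl; lra|].
  rewrite !exp_future_S, S_INR.
  transitivity (slot_mean P alg h (fun _ d => mu1 d + mu2 d) +
    slot_mean P alg h (fun s d => exp_future P alg mu1 ((s, d) :: h) n +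
                                exp_future P alg mu2 ((s, d) :: h) n)).
  - rewrite !slot_mean_add; ring.
  - rewrite slot_mean_transmissions, (slot_mean_ext _ _ _ _ (fun _ _ => INR n)),
      slot_mean_const by auto.
    ring.
Qed.
End Slot.

Lemma in_Lambda_bounds P x1 x2 : is_pmf P -> in_Lambda P x1 x2 ->
  exists alg, valid_alg alg /\ 0 <= x1 /\ 0 <= x2 /\ x1 + x2 <= 1 /\
    x1 = slot_mean P alg [] (fun _ => mu1) /\ x2 = slot_mean P alg [] (fun _ => mu2).
Proof.
  intros HP (r & Hnn & Hsum & Hna & E1 & E2).
  assert (Halg : valid_alg (fun _ => r)) by (repeat split; auto).
  exists (fun _ => r); split; [exact Halg|].
  change (x1 = slot_mean P (fun _ => r) [] (fun _ => mu1)) in E1.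
  change (x2 = slot_mean P (fun _ => r) [] (fun _ => mu2)) in E2.
  subst; repeat split.
  - apply (slot_mean_ge _ Halg P HP); intros _ []; simpl; lra.
  - apply (slot_mean_ge _ Halg P HP); intros _ []; simpl; lra.
  - rewrite <- slot_mean_add; apply (slot_mean_le _ Halg P HP); intros _ []; simpl; lra.
Qed.

Lemma is_phi_opt_pmfA : is_phi_opt pmfA phi_opt_value.
Proof.
  split.
  - intros x1 x2 HL.
    destruct (in_Lambda_bounds _ _ _ is_pmf_pmfA HL) as (alg & Halg & ? & ? & ? & _ & E2).
    apply phi_le_opt; auto.
    rewrite E2, slot_mean_pmfA_mu2 by auto; pose proof (alg_le1 alg Halg [] ON_ON D01); lra.
  - exists (3/4), (1/4); split; [|reflexivity].
    exists (fun s d => match s, d with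
                | ON_OFF, D10 | ON_ON, D01 | OFF_ON, D01 => 1 | _, _ => 0 end).
    repeat split.
    + intros [] []; lra.
    + intros []; unfold sum_dec; lra.
    + intros [] []; simpl; tauto.
    + unfold sum_state, sum_dec, pmfA, mu1; lra.
    + unfold sum_state, sum_dec, pmfA, mu2; lra.
Qed.

Lemma is_phi_opt_pmfB : is_phi_opt pmfB phi_opt_value.
Proof.
  split.
  - intros x1 x2 HL.
    destruct (in_Lambda_bounds _ _ _ is_pmf_pmfB HL) as (alg & Halg & ? & ? & ? & E1 & _).
    rewrite phi_comm; apply phi_le_opt; [auto | auto | lra |].
    rewrite E1, slot_mean_pmfB_mu1 by auto; pose proof (alg_le1 alg Halg [] ON_ON D10); lra.
  - exists (1/4), (3/4); split; [|apply phi_comm].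
    exists (fun s d => match s, d with
                | ON_OFF, D10 | ON_ON, D10 | OFF_ON, D01 => 1 | _, _ => 0 end).
    repeat split.
    + intros [] []; lra.
    + intros []; unfold sum_dec; lra.
    + intros [] []; simpl; tauto.
    + unfold sum_state, sum_dec, pmfB, mu1; lra.
    + unfold sum_state, sum_dec, pmfB, mu2; lra.
Qed.

Lemma phi_exp_avg_gap P alg f g T : is_pmf P -> valid_alg alg ->
  (forall d, 0 <= f d) -> (forall d, 0 <= g d) -> (0 < T)%nat ->
  exp_future P alg f [] T + exp_future P alg g [] T = INR T ->
  exp_future P alg g [] T <= INR T / 4 - 1/8 ->
  phi (exp_avg P alg f T) (exp_avg P alg g T) <= phi_opt_value - 1 / (35 * INR T).
Proof.
  intros HP Halg Hf Hg HT Hsum Hgap; unfold exp_avg.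
  apply phi_average_gap; auto using exp_future_ge0.
  apply lt_0_INR; exact HT.
Qed.

Lemma pmfA_gap alg : valid_alg alg -> always_transmits alg -> alg [] ON_ON D01 <= 1/2 ->
  forall T, (0 < T)%nat ->
  phi (exp_avg pmfA alg mu1 T) (exp_avg pmfA alg mu2 T) <= phi_opt_value - 1 / (35 * INR T).
Proof.
  intros Halg W Hq [|n] HT; [lia|].
  apply phi_exp_avg_gap; auto using is_pmf_pmfA, exp_future_mu1_add_mu2;
    try (intros []; simpl; lra).
  assert (Hslot : forall h, slot_mean pmfA alg h (fun _ => mu2) <= 1/4).
  { intro h; rewrite slot_mean_pmfA_mu2 by auto.
    pose proof (alg_le1 alg Halg h ON_ON D01); lra. }
  pose proof (exp_future_le_first alg Halg pmfA is_pmf_pmfA mu2 (1/4) Hslot [] n (1/8)).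
  rewrite slot_mean_pmfA_mu2 in * by auto; lra.
Qed.

Lemma pmfB_gap alg : valid_alg alg -> always_transmits alg -> alg [] ON_ON D10 <= 1/2 ->
  forall T, (0 < T)%nat ->
  phi (exp_avg pmfB alg mu1 T) (exp_avg pmfB alg mu2 T) <= phi_opt_value - 1 / (35 * INR T).
Proof.
  intros Halg W Hq [|n] HT; [lia|].
  rewrite phi_comm; apply phi_exp_avg_gap; auto using is_pmf_pmfB;
    try (intros []; simpl; lra).
  - rewrite Rplus_comm; apply exp_future_mu1_add_mu2; auto using is_pmf_pmfB.
  - assert (Hslot : forall h, slot_mean pmfB alg h (fun _ => mu1) <= 1/4).
    { intro h; rewrite slot_mean_pmfB_mu1 by auto.
      pose proof (alg_le1 alg Halg h ON_ON D10); lra. }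
    pose proof (exp_future_le_first alg Halg pmfB is_pmf_pmfB mu1 (1/4) Hslot [] n (1/8)).
    rewrite slot_mean_pmfB_mu1 in * by auto; lra.
Qed.

Theorem mainTheorem7 :
  forall alg : algorithm, valid_alg alg -> always_transmits alg ->
  exists P : State -> R, (P = pmfA \/ P = pmfB) /\
    is_phi_opt P phi_opt_value /\
    (forall T : nat, (2 <= T)%nat ->
       phi (exp_avg P alg mu1 T) (exp_avg P alg mu2 T)
         <= phi_opt_value - 1 / (35 * INR T)).
Proof.
  intros alg Halg W.
  destruct (Rle_lt_dec (alg [] ON_ON D01) (1/2)) as [Hq | Hq].
  - exists pmfA; split; [left; reflexivity|]; split; [exact is_phi_opt_pmfA|].
    intros T HT; apply pmfA_gap; auto; lia.
  - exists pmfB; split; [right; reflexivity|]; split; [exact is_phi_opt_pmfB|].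
    intros T HT; apply pmfB_gap; auto; [|lia].
    pose proof (alg_D10_add_D01_le1 alg Halg [] ON_ON); lra.
Qed.
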